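(* Consider an advertiser in a repeated single-slot hybrid auction with per-click value $v>0$ that knows its true click-through rate $p$, while the auctioneer's initial prior on this rate is $\mathrm{Beta}(\alpha,\beta)$ (density proportional to $x^{\alpha-1}(1-x)^{\beta-1}$), Bayes-updated after each impression, so that after $T$ impressions with $N$ clicks it is $\mathrm{Beta}(\alpha+N,\beta+T-N)$ with mean $(\alpha+N)/(\alpha+\beta+T)$. Fix $\epsilon>0$ and let $p'=p(1-\epsilon)$. In the explore phase the advertiser bids $(vp',v)$ (per-impression bid $vp'$, per-click bid $v$), receiving impressions charged per impression, and the explore phase stops as soon as the auctioneer's posterior mean is at least $p(1-\epsilon)$ (so it has length $0$ if the initial mean $\alpha/(\alpha+\beta)$ is already at least $p(1-\epsilon)$). If the explore phase consists of $T$ impressions resulting in $N$ clicks, its worst-case loss in revenue for the advertiser is defined as $v(Tp'-N)$. Then the explore phase incurs no loss in revenue for the advertiser, i.e. $v(Tp'-N)\le 0$.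
   Context: Loss in revenue means the amount paid to the auctioneer minus the value earned from actual clicks; in the explore phase the per-impression price is at most the per-impression bid $vp'$, which gives the worst-case loss $v(Tp'-N)$. *)

From mathcomp Require Import all_boot all_order all_algebra.
Set Implicit Arguments. Unset Strict Implicit. Unset Printing Implicit Defensive.
Import Order.TTheory GRing.Theory Num.Theory.
Local Open Scope ring_scope.

(* click outcomes of successive impressions: c i = true iff impression i was clicked *)
Definition clicks (R : numDomainType) (c : nat -> bool) (t : nat) : R :=
  \sum_(i < t) (c i)%:R.

(* mean of the auctioneer's posterior Beta(alpha + N, beta + t - N) after t impressions *)
Definition posterior_mean (R : numFieldType) (alpha beta : R) (c : nat -> bool) (t : nat) : R :=
  (alpha + clicks R c t) / (alpha + beta + t%:R).

Definition explore_length (R : realFieldType) (alpha beta p' : R) (c : nat -> bool) (T : nat) : Prop :=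
  (forall t, (t < T)%N -> posterior_mean alpha beta c t < p') /\
  p' <= posterior_mean alpha beta c T.

Definition explore_loss (R : realFieldType) (v p' : R) (c : nat -> bool) (T : nat) : R :=
  v * (T%:R * p' - clicks R c T).

From mathcomp Require Import all_boot all_order all_algebra.
From mathcomp Require Import lra.
Import Order.TTheory GRing.Theory Num.Theory.
Local Open Scope ring_scope.

(* Only the two ends of the explore phase matter: the prior mean alpha/(alpha+beta)
   is below p', so alpha < p'(alpha+beta); the final posterior mean is at least p',
   so alpha + N >= p'(alpha+beta+T). Subtracting gives N > T p', whence the loss
   v (T p' - N) is nonpositive. *)

Lemma clicks0 (R : numDomainType) (c : nat -> bool) : clicks R c 0 = 0.
Proof. by rewrite /clicks big_ord0. Qed.

Lemma posterior_mean0 (R : numFieldType) (alpha beta : R) (c : nat -> bool) :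
  posterior_mean alpha beta c 0 = alpha / (alpha + beta).
Proof. by rewrite /posterior_mean clicks0 !addr0. Qed.

Lemma mean_crossing_clicks_ge (R : realFieldType) (alpha beta q N t : R) :
  0 < alpha + beta -> 0 <= t ->
  alpha / (alpha + beta) < q -> q <= (alpha + N) / (alpha + beta + t) ->
  t * q <= N.
Proof.
move=> ab_gt0 t_ge0; have abt_gt0 : 0 < alpha + beta + t by rewrite ltr_wpDr.
by rewrite ltr_pdivrMr // ler_pdivlMr // mulrDr; lra.
Qed.

Lemma explore_length_clicks_ge (R : realFieldType) (alpha beta p' : R)
    (c : nat -> bool) (T : nat) :
  0 < alpha -> 0 < beta -> explore_length alpha beta p' c T ->
  T%:R * p' <= clicks R c T.
Proof.
move=> a_gt0 b_gt0; case: T => [_|T [before_lt at_ge]].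
  by rewrite clicks0 mul0r.
have prior_lt : alpha / (alpha + beta) < p'.
  by rewrite -(posterior_mean0 R alpha beta c) before_lt.
exact: mean_crossing_clicks_ge (addr_gt0 a_gt0 b_gt0) (ler0n _ _) prior_lt at_ge.
Qed.

Theorem claim1 (R : realFieldType) (v p eps alpha beta : R) (c : nat -> bool) (T : nat) :
  0 < v -> 0 <= p -> p <= 1 -> 0 < eps -> 0 < alpha -> 0 < beta ->
  explore_length alpha beta (p * (1 - eps)) c T ->
  explore_loss v (p * (1 - eps)) c T <= 0.
Proof.
move=> v_gt0 _ _ _ a_gt0 b_gt0 explore.
rewrite /explore_loss pmulr_rle0 // subr_le0.
exact: explore_length_clicks_ge explore.
Qed.
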